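(* Let $f:\mathbb{R}^n\to\mathbb{R}$ and let $U\subseteq\mathbb{R}^n$ be a nonempty open convex set. Suppose $f$ and $-f$ are prox-bounded with thresholds $\lambda_f,\lambda_{-f}>0$, and $0<1/L<\min\{\lambda_f,\lambda_{-f}\}$. Then the following are equivalent: (a) $\partial_p^{1/L}f(x)\ne\varnothing$ and $\partial_p^{1/L}(-f)(x)\ne\varnothing$ for all $x\in U$; (b) $\partial_F(Lj+f)(x)\ne\varnothing$ and $\partial_F(Lj-f)(x)\ne\varnothing$ for all $x\in U$; (c) $f$ is differentiable on $U$ and $|f(y)-f(x)-\langle\nabla f(x),y-x\rangle|\le\frac L2\|y-x\|^2$ for all $y\in\mathbb{R}^n$ and $x\in U$. When one of these holds, $\nabla f$ is $L$-Lipschitz on $U$.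
   Context: $j:=\frac12\|\cdot\|^2$. Prox-bounded with threshold $\lambda_f=\sup\{\lambda>0:\inf_y\{f(y)+\frac1{2\lambda}\|y-x\|^2\}>-\infty\text{ for some }x\}$. $v\in\partial_p^\lambda f(x)$ iff $f(y)\ge f(x)+\langle v,y-x\rangle-\frac1{2\lambda}\|y-x\|^2$ for all $y$. Fenchel subdifferential: $v\in\partial_F g(x)$ iff $g(y)\ge g(x)+\langle v,y-x\rangle$ for all $y$. *)

From HB Require Import structures.
From mathcomp Require Import all_boot all_order all_algebra.
From mathcomp Require Import all_classical all_reals all_analysis.
Set Implicit Arguments. Unset Strict Implicit. Unset Printing Implicit Defensive.
Import Order.TTheory GRing.Theory Num.Theory.
Import numFieldNormedType.Exports.
Local Open Scope classical_set_scope.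
Local Open Scope ring_scope.

Section Defs.
Variables (R : realType) (n : nat).
Implicit Types (x y v : 'rV[R]_n) (f g : 'rV[R]_n -> R).

Definition dotp x y : R := \sum_(i < n) x ord0 i * y ord0 i.
Definition enorm x : R := Num.sqrt (dotp x x).
Definition jhalf x : R := (dotp x x) / 2.

Definition prox_cond f (lam : R) : Prop :=
  exists x, exists m : R, forall y, m <= f y + (2 * lam)^-1 * dotp (y - x) (y - x).
Definition prox_bounded f : Prop := exists lam : R, 0 < lam /\ prox_cond f lam.
Definition prox_threshold f : \bar R :=
  ereal_sup [set (lam%:E)%E | lam in [set lam : R | 0 < lam /\ prox_cond f lam]].

Definition prox_subdiff (lam : R) f x : set 'rV[R]_n :=
  [set v | forall y, f x + dotp v (y - x) - (2 * lam)^-1 * dotp (y - x) (y - x) <= f y].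
Definition fenchel_subdiff g x : set 'rV[R]_n :=
  [set v | forall y, g x + dotp v (y - x) <= g y].

Definition convex_rV (U : set 'rV[R]_n) : Prop :=
  forall x y (t : R), U x -> U y -> 0 <= t -> t <= 1 -> U ((1 - t) *: x + t *: y).

Definition grad f x : 'rV[R]_n := \row_(i < n) ('d f x (delta_mx ord0 i : 'rV[R]_n)).

End Defs.

From HB Require Import structures.
From mathcomp Require Import all_boot all_order all_algebra.
From mathcomp Require Import all_classical all_reals all_analysis.
From mathcomp Require Import ring lra.

(* A proximal subgradient v of f and w of -f at x give a lower and an upper
   quadratic model of f around x; adding them forces w = -v, so f is squeezed
   between f x + <v, y - x> -/+ L/2 |y - x|^2 and is therefore differentiable
   at x with gradient v.  Translating by L x turns a proximal subgradient of
   +/-f into a Fenchel subgradient of L j +/- f.  Comparing the two-sided bounds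
   at x and at y in the points x + w and y - w, with w chosen to complete a
   square, yields |grad f x - grad f y| <= L |x - y|. *)

Set Implicit Arguments.
Unset Strict Implicit.
Unset Printing Implicit Defensive.

Import Order.TTheory GRing.Theory Num.Theory.
Import numFieldNormedType.Exports.
Local Open Scope classical_set_scope.
Local Open Scope ring_scope.

Section Dotp.
Variables (R : realType) (n : nat).
Implicit Types (x y z : 'rV[R]_n).

Lemma dotpC x y : dotp x y = dotp y x.
Proof. by apply: eq_bigr => i _; rewrite mulrC. Qed.

Lemma dotp_linear x : linear (dotp x).
Proof.
move=> a y z; rewrite /dotp scaler_sumr -big_split /=.
by apply: eq_bigr => i _; rewrite !mxE mulrDr [_ *: _]mulrCA.
Qed.

HB.instance Definition _ x :=
  GRing.isLinear.Build R 'rV[R]_n R *:%R (dotp x) (dotp_linear x).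

Lemma dotp_continuous x : continuous (dotp x).
Proof.
have := @continuous_big R^o _ +%R 0 xpredT add_continuous _ (index_enum 'I_n)
  (fun i (h : 'rV[R]_n) => x ord0 i * h ord0 i).
apply=> i _ h.
exact: continuousM (@cst_continuous _ _ (x ord0 i) h)
  (@coord_continuous R 1 n ord0 i h).
Qed.

Lemma dotpDr x y z : dotp x (y + z) = dotp x y + dotp x z.
Proof. exact: linearD. Qed.

Lemma dotpZr (a : R) x y : dotp x (a *: y) = a * dotp x y.
Proof. exact: linearZ. Qed.

Lemma dotpNr x y : dotp x (- y) = - dotp x y.
Proof. exact: linearN. Qed.

Lemma dotpDl x y z : dotp (x + y) z = dotp x z + dotp y z.
Proof. by rewrite dotpC dotpDr !(dotpC z). Qed.

Lemma dotpZl (a : R) x y : dotp (a *: x) y = a * dotp x y.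
Proof. by rewrite dotpC dotpZr dotpC. Qed.

Lemma dotpNl x y : dotp (- x) y = - dotp x y.
Proof. by rewrite dotpC dotpNr dotpC. Qed.

Lemma dotpBl x y z : dotp (x - y) z = dotp x z - dotp y z.
Proof. by rewrite dotpDl dotpNl. Qed.

Lemma dotp_sqrD x y : dotp (x + y) (x + y) = dotp x x + 2 * dotp x y + dotp y y.
Proof. by rewrite !dotpDl !dotpDr (dotpC y x); ring. Qed.

Lemma dotpp_ge0 x : 0 <= dotp x x.
Proof. by apply: sumr_ge0 => i _; rewrite -expr2 sqr_ge0. Qed.

Lemma dotpp_eq0 x : (dotp x x == 0) = (x == 0).
Proof.
apply/idP/eqP => [|->]; last by rewrite linear0.
rewrite psumr_eq0 => [/allP x0|i _]; last by rewrite -expr2 sqr_ge0.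
apply/rowP => i; rewrite mxE.
have /implyP/(_ isT) := x0 i (mem_index_enum i).
by rewrite mulf_eq0 orbb [ord0]ord1 => /eqP.
Qed.

Lemma dotp_delta_mx x i : dotp x (delta_mx ord0 i) = x ord0 i.
Proof.
rewrite /dotp (bigD1 i) //= big1 ?addr0 => [|j /negbTE ji].
  by rewrite mxE !eqxx mulr1.
by rewrite mxE ji andbF mulr0.
Qed.

Lemma dotpp_le_mx_norm x : dotp x x <= n%:R * `|x| ^+ 2.
Proof.
rewrite mulr_natl -[n in _ *+ n]card_ord -sumr_const /dotp.
apply: ler_sum => i _.
rewrite -expr2 -real_normK ?num_real // lerXn2r ?nnegrE //.
rewrite [leRHS]/Num.norm /= mx_normrE; apply/bigmax_geP; right.
by exists (ord0, i).
Qed.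

Lemma is_diff_grad (f : 'rV[R]_n -> R) x v :
  is_diff x f (dotp v) -> grad f x = v.
Proof. by move=> fd; apply/rowP => i; rewrite mxE diff_val dotp_delta_mx. Qed.

End Dotp.

Section Littleo.
Variables (R : realType) (V W : normedModType R).

Lemma littleo_is_diff (g : V -> W) (d : {linear V -> W}) x :
  continuous d -> g \o shift x = cst (g x) + d +o_ 0 id -> is_diff x g d.
Proof.
move=> dc gd; have dE := diff_unique dc gd.
by apply: DiffDef => //; apply/diff_locallyP; rewrite dE.
Qed.

Lemma sqr_bounded_littleo (g : V -> W) (K : R) :
  0 <= K -> (forall h, `|g h| <= K * `|h| ^+ 2) -> g =o_ (0 : V) id.
Proof.
move=> K0 gK; apply/eqoP => eps eps0.
have K1 : 0 < K + 1 := ltr_wpDl K0 ltr01.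
apply: filterS (nbhs0_lt (divr_gt0 eps0 K1)) => h.
rewrite ltr_pdivlMr // => hlt.
apply: le_trans (gK h) _; rewrite expr2 mulrA ler_wpM2r //.
by apply: le_trans (ltW hlt); rewrite mulrC ler_wpM2l // lerDl.
Qed.

End Littleo.

Section QuadraticBound.
Variables (R : realType) (n : nat) (L : R).
Hypothesis L_gt0 : 0 < L.
Implicit Types (f g : 'rV[R]_n -> R) (x y v w : 'rV[R]_n).

Definition quad_bound f x v := forall y,
  `|f y - f x - dotp v (y - x)| <= L / 2 * dotp (y - x) (y - x).

Let prox_coef : (2 * L^-1)^-1 = L / 2.
Proof. by rewrite invfM invrK mulrC. Qed.

Let L2_ge0 : 0 <= L / 2.
Proof. by rewrite divr_ge0 ?ltW. Qed.

Lemma prox_subdiff_fenchel g x v :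
  prox_subdiff L^-1 g x v <->
  fenchel_subdiff (fun z => L * jhalf z + g z) x (v + L *: x).
Proof.
have jhalfD h :
    L * jhalf (h + x) = L * jhalf x + L * dotp x h + L / 2 * dotp h h.
  by rewrite /jhalf addrC dotp_sqrD; field.
rewrite /prox_subdiff /fenchel_subdiff /= prox_coef.
split=> H y; have [h ->] : exists h, y = h + x by exists (y - x); rewrite subrK.
all: by have := H (h + x); rewrite addrK jhalfD dotpDl dotpZl; lra.
Qed.

Lemma prox_subdiff_fenchel_neq0 g x :
  prox_subdiff L^-1 g x !=set0 <->
  fenchel_subdiff (fun z => L * jhalf z + g z) x !=set0.
Proof.
split=> [[v /prox_subdiff_fenchel vg] | [u]]; first by exists (v + L *: x).
by rewrite -(subrK (L *: x) u) => /prox_subdiff_fenchel ug; exists (u - L *: x).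
Qed.

Lemma prox_subdiff_opp f x v w :
  prox_subdiff L^-1 f x v -> prox_subdiff L^-1 (fun z => - f z) x w -> w = - v.
Proof.
rewrite /prox_subdiff /= prox_coef => fv fw.
have sum_le h : dotp (v + w) h <= L * dotp h h.
  by have := fv (h + x); have := fw (h + x); rewrite addrK dotpDl; lra.
set c := (2 * L)^-1; have c_gt0 : 0 < c by rewrite invr_gt0 mulr_gt0.
have : c * dotp (v + w) (v + w) <= 0.
  have Lc : L * c = 2^-1 by rewrite /c invfM mulrCA divff ?mulr1 ?gt_eqF.
  have := sum_le (c *: (v + w)); rewrite dotpZr dotpZl dotpZr mulrA Lc; lra.
rewrite pmulr_rle0 // => vw_le0.
have /eqP : dotp (v + w) (v + w) = 0 by apply/le_anti; rewrite vw_le0 dotpp_ge0.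
by rewrite dotpp_eq0 addrC addr_eq0 => /eqP.
Qed.

Lemma prox_subdiff_pairE f x v :
  prox_subdiff L^-1 f x v /\ prox_subdiff L^-1 (fun z => - f z) x (- v) <->
  quad_bound f x v.
Proof.
rewrite /prox_subdiff /quad_bound /= prox_coef.
split=> [[fv fNv] y | fq].
  by have := fv y; have := fNv y; rewrite dotpNl ler_norml; lra.
by split=> y; have := fq y; rewrite ?dotpNl ler_norml => /andP[]; lra.
Qed.

Lemma prox_subdiff_pair_neq0 f x :
  prox_subdiff L^-1 f x !=set0 /\ prox_subdiff L^-1 (fun z => - f z) x !=set0 <->
  exists v, quad_bound f x v.
Proof.
split=> [[[v fv] [w fw]] | [v /prox_subdiff_pairE[fv fNv]]]; last first.
  by split; [exists v | exists (- v)].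
exists v; apply/prox_subdiff_pairE; split=> //.
by rewrite -(prox_subdiff_opp fv fw).
Qed.

Lemma quad_bound_is_diff f x v : quad_bound f x v -> is_diff x f (dotp v).
Proof.
move=> fq; apply: (littleo_is_diff (d := dotp v)); first exact: dotp_continuous.
apply/eqaddoP/eqoP.
apply: (@sqr_bounded_littleo _ _ _ _ (L / 2 * n%:R)) => [|h].
  by rewrite mulr_ge0.
rewrite !fctE opprD addrA -mulrA.
move: (fq (h + x)); rewrite addrK => /le_trans.
by apply; rewrite ler_wpM2l ?dotpp_le_mx_norm.
Qed.

Lemma quad_bound_gradE f x :
  (exists v, quad_bound f x v) <-> differentiable f x /\ quad_bound f x (grad f x).
Proof.
split=> [[v fq] | [_ fq]]; last by exists (grad f x).
have fd := quad_bound_is_diff fq.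
by rewrite (is_diff_grad fd); split=> //; exact: ex_diff.
Qed.

Lemma quad_bound_lipschitz f x y a b :
  quad_bound f x a -> quad_bound f y b -> enorm (a - b) <= L * enorm (x - y).
Proof.
move=> fa fb; set d := a - b; set h := x - y.
have Q_ge0 w :
    0 <= L * (dotp (h + w) (h + w) + dotp w w) + dotp d h + 2 * dotp d w.
  have E1 : x + w - x = w by rewrite addrAC subrr add0r.
  have E2 : x + w - y = h + w by rewrite addrAC.
  have E3 : y - w - y = - w by rewrite addrAC subrr add0r.
  have E4 : y - w - x = - (h + w) by rewrite opprD opprB addrAC.
  have := fa (x + w); have := fb (x + w); have := fb (y - w); have := fa (y - w).
  rewrite E1 E2 E3 E4 !dotpNl !dotpNr !opprK !ler_norml /d !dotpBl !dotpDr.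
  move=> /andP[? ?] /andP[? ?] /andP[? ?] /andP[? ?]; lra.
clearbody d h.
(* Completing the square in w; the square vanishes at w0 below. *)
have Q_id w :
    2 * L * (L * (dotp (h + w) (h + w) + dotp w w) + dotp d h + 2 * dotp d w)
    = dotp (2 * L *: w + (d + L *: h)) (2 * L *: w + (d + L *: h))
      + L ^+ 2 * dotp h h - dotp d d.
  rewrite !dotp_sqrD !dotpDr !dotpZl !dotpZr (dotpC h w) (dotpC w d) (dotpC w h).
  by ring.
pose w0 := - (2 * L)^-1 *: (d + L *: h).
have w0E : 2 * L *: w0 + (d + L *: h) = 0.
  by rewrite scalerA mulrN divff ?scaleN1r ?addNr // mulf_neq0 ?gt_eqF.
have : 0 <= L ^+ 2 * dotp h h - dotp d d.
  have := mulr_ge0 (ltW (mulr_gt0 (ltr0Sn _ 1) L_gt0)) (Q_ge0 w0).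
  by rewrite Q_id w0E linear0 add0r.
rewrite subr_ge0 => dd_le; rewrite /enorm -(ger0_norm (ltW L_gt0)) -sqrtr_sqr.
by rewrite -sqrtrM ?sqr_ge0 // ler_wsqrtr.
Qed.

End QuadraticBound.

Theorem mainTheorem13 (R : realType) (n : nat) (f : 'rV[R]_n -> R)
  (U : set 'rV[R]_n) (L : R) :
  U !=set0 -> open U -> convex_rV U ->
  prox_bounded f -> prox_bounded (fun z => (- f z)%R) ->
  0 < L ->
  ((L^-1)%:E < prox_threshold f)%E ->
  ((L^-1)%:E < prox_threshold (fun z => (- f z)%R))%E ->
  let A := forall x, U x ->
      prox_subdiff L^-1 f x !=set0 /\ prox_subdiff L^-1 (fun z => (- f z)%R) x !=set0 in
  let B := forall x, U x ->
      fenchel_subdiff (fun z => (L * jhalf z + f z)%R) x !=set0 /\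
      fenchel_subdiff (fun z => (L * jhalf z - f z)%R) x !=set0 in
  let C := (forall x, U x -> differentiable f x) /\
      (forall x y, U x ->
         `| f y - f x - dotp (grad f x) (y - x) | <= L / 2 * dotp (y - x) (y - x)) in
  (A <-> B) /\ (B <-> C) /\
  (A \/ B \/ C -> forall x y, U x -> U y -> enorm (grad f x - grad f y) <= L * enorm (x - y)).
Proof.
(* Neither U nor prox-boundedness matters: the equivalences hold pointwise. *)
move=> _ _ _ _ _ L_gt0 _ _ A B C.
have AB : A <-> B.
  split=> H x /H[fx fNx]; split.
  - by apply/prox_subdiff_fenchel_neq0.
  - by apply/(prox_subdiff_fenchel_neq0 _ (fun z => - f z)).
  - by apply/prox_subdiff_fenchel_neq0.
  - by apply/(prox_subdiff_fenchel_neq0 _ (fun z => - f z)).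
have AC : A <-> C.
  have pointwise x : prox_subdiff L^-1 f x !=set0 /\
      prox_subdiff L^-1 (fun z => - f z) x !=set0 <->
      differentiable f x /\ quad_bound L f x (grad f x).
    exact: iff_trans (prox_subdiff_pair_neq0 L_gt0 f x)
                     (quad_bound_gradE L_gt0 f x).
  split=> [H | [fd fq] x Ux]; last first.
    by apply/pointwise; split=> [|y]; [exact: fd | exact: fq].
  by split=> [x /H/pointwise[] | x y /H/pointwise[_ fq]].
split=> //; split; first exact: iff_trans (iff_sym AB) AC.
move=> ABC x y Ux Uy; have [_ fq] : C by case: ABC => [/AC | [/AB/AC |]].
apply: (quad_bound_lipschitz L_gt0) => z.
  exact: fq x z Ux.
exact: fq y z Uy.
Qed.
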